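(* There are two primitive embeddings of the lattice $A_5\oplus A_1$ into the root lattice $D_8$ that are not isomorphic up to the Weyl group $W(D_8)$, i.e. no element of $W(D_8)$ maps the image of one onto the image of the other. Explicitly, identifying $D_8(-1)$ with $\{v\in\mathbb Z^8:\sum v_i\text{ even}\}$ with standard basis $\varepsilon_1,\dots,\varepsilon_8$, and taking the basis $d_8=\varepsilon_1+\varepsilon_2$, $d_{9-i}=-\varepsilon_{i-1}+\varepsilon_i$ ($2\le i\le 8$), the two embeddings have images $\langle d_7,d_6,d_5,d_4,d_3\rangle\oplus\langle \varepsilon_7+\varepsilon_8\rangle$ and $\langle d_7,d_6,d_5,d_4,d_3\rangle\oplus\langle d_1\rangle$.
   Context: $A_k$, $D_k$ denote the negative-definite root lattices of the corresponding Dynkin types. An embedding is primitive if the quotient is torsion-free. The Weyl group $W(D_8)$ is generated by the reflections $x\mapsto x+(a\cdot x)a$ in roots $a$ ($a\cdot a=-2$) of $D_8$. *)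

From HB Require Import structures.
From mathcomp Require Import all_boot all_order all_algebra.
Set Implicit Arguments. Unset Strict Implicit. Unset Printing Implicit Defensive.
Import Order.TTheory GRing.Theory Num.Theory.
Local Open Scope ring_scope.

Notation vec8 := 'rV[int]_8.

Definition bD8 (u v : vec8) : int := - \sum_(i < 8) u 0 i * v 0 i.

Definition inD8 (v : vec8) : Prop := (2 %| \sum_(i < 8) v 0 i)%Z.

Definition isRootD8 (a : vec8) : Prop := inD8 a /\ bD8 a a = -2.

Definition refl (a : vec8) (x : vec8) : vec8 := x + bD8 a x *: a.

(* W(D_8): the group generated by the reflections in roots of D_8
   (reflections are involutions, so the generated monoid is the group). *)
Inductive inWD8 : (vec8 -> vec8) -> Prop :=
| WD8_id : inWD8 id
| WD8_refl (a : vec8) (f : vec8 -> vec8) :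
    isRootD8 a -> inWD8 f -> inWD8 (refl a \o f).

(* standard basis eps_1 .. eps_8 (1-indexed) *)
Definition eps (k : nat) : vec8 := \row_(j < 8) (if (j : nat) == k.-1 then 1 else 0).

(* basis d_8 = eps_1 + eps_2, d_{9-i} = - eps_{i-1} + eps_i  (2 <= i <= 8) *)
Definition d (k : nat) : vec8 :=
  if k == 8%N then eps 1 + eps 2 else - eps (8 - k) + eps (9 - k).

(* Gram matrix of A_5 (+) A_1 (negative definite) w.r.t. simple roots
   r_0,...,r_4 (A_5 chain) and r_5 (A_1). *)
Definition gramA5A1 (i j : 'I_6) : int :=
  if i == j then -2
  else if [&& (i < 5)%N, (j < 5)%N & ((i == j.+1 :> nat) || (j == i.+1 :> nat))]
       then 1 else 0.

(* A Z-linear map from A_5 (+) A_1 = Z^6 into Z^8, given by the images of the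
   simple roots, is an embedding into D_8 if its image lies in D_8 and it
   preserves the form (injectivity follows from nondegeneracy). *)
Definition isEmbeddingA5A1 (L : 'I_6 -> vec8) : Prop :=
  (forall i, inD8 (L i)) /\ (forall i j, bD8 (L i) (L j) = gramA5A1 i j).

Definition imageL (L : 'I_6 -> vec8) (v : vec8) : Prop :=
  exists c : 'I_6 -> int, v = \sum_(i < 6) c i *: L i.

Definition primitiveL (L : 'I_6 -> vec8) : Prop :=
  forall (v : vec8) (n : int), inD8 v -> n != 0 -> imageL L (n *: v) -> imageL L v.

Definition mapsOnto (w : vec8 -> vec8) (L L' : 'I_6 -> vec8) : Prop :=
  (forall v, imageL L v -> imageL L' (w v)) /\
  (forall v', imageL L' v' -> exists v, imageL L v /\ w v = v').

Definition emb1 (i : 'I_6) : vec8 :=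
  nth 0 [:: d 7; d 6; d 5; d 4; d 3; eps 7 + eps 8] i.
Definition emb2 (i : 'I_6) : vec8 :=
  nth 0 [:: d 7; d 6; d 5; d 4; d 3; d 1] i.

From mathcomp Require Import all_boot all_order all_algebra all_fingroup zify.
Set Implicit Arguments. Unset Strict Implicit. Unset Printing Implicit Defensive.
Import Order.TTheory GRing.Theory Num.Theory.
Local Open Scope ring_scope.

(** Every root of D_8 is +-e_p +- e_q, so W(D_8) acts on Z^8 by signed
    permutations with an even number of sign changes.  The image of emb2
    lies in the hyperplane of coordinate sum zero; hence if some w in
    W(D_8) mapped the image of emb1 into that of emb2, the image of emb1
    would be orthogonal to the pull-back u of (1,...,1) by w, a sign vector
    with an even number of minus signs.  But orthogonality to the roots
    e_(i+1) - e_i forces u_1 = ... = u_6, and to e_7 + e_8 forces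
    u_7 = - u_8, so u has an odd number of minus signs.  Primitivity holds
    because both images are cut out of Z^8 by linear equations. *)

Definition is_sign (s : int) : Prop := s = 1 \/ s = -1.

Lemma is_signM s t : is_sign s -> is_sign t -> is_sign (s * t).
Proof. by case=> ->; case=> ->; rewrite /is_sign; lia. Qed.

Lemma is_signN s : is_sign s -> is_sign (- s).
Proof. by case=> ->; rewrite /is_sign; lia. Qed.

Lemma is_sign_sqr (x : int) : x != 0 -> x * x <= 3 -> is_sign x.
Proof. by move=> /eqP x0 le3; rewrite /is_sign; nia. Qed.

Lemma sum_sqr_peel (I : finType) (P : pred I) (x : I -> int) (m : int) :
  0 < m <= 3 -> \sum_(i | P i) x i * x i = m ->
  exists p, [/\ P p, is_sign (x p) & \sum_(i | P i && (i != p)) x i * x i = m - 1].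
Proof.
move=> m_bounds sum_m.
have [p /andP[Pp xp0] | all0] := pickP (fun i => P i && (x i != 0)); last first.
  move: sum_m; rewrite big1 => [|i Pi]; first lia.
  by move: (all0 i); rewrite Pi => /negbFE/eqP ->; rewrite mulr0.
exists p; move: sum_m; rewrite (bigD1 p) //=.
have : 0 <= \sum_(i | P i && (i != p)) x i * x i.
  by apply: sumr_ge0 => i _; rewrite -expr2 sqr_ge0.
set rest := \sum_(i | _) _ => rest_ge0 sum_m.
have sign_p : is_sign (x p) by apply: is_sign_sqr => //; lia.
by split=> //; case: sign_p sum_m => ->; lia.
Qed.

Lemma root_D8E a : isRootD8 a ->
  exists p q, exists s t, [/\ p != q, is_sign s, is_sign t & a = s *: 'e_p + t *: 'e_q].
Proof.
move=> [_]; rewrite /bD8 => /eqP; rewrite eqr_opp => /eqP sum2.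
have [p [_ sign_p sum1]] := sum_sqr_peel (m := 2) isT sum2.
have [q [/= qp sign_q sum0]] := sum_sqr_peel (m := 2 - 1) isT sum1.
have a0 k : k != p -> k != q -> a 0 k = 0.
  move=> kp kq; apply/eqP; rewrite -[_ == 0]orbb -mulf_eq0; apply/eqP.
  by apply: (psumr_eq0P _ sum0) => [i _|]; rewrite ?kp ?kq // -expr2 sqr_ge0.
exists p, q, (a 0 p), (a 0 q); split => //; first by rewrite eq_sym.
apply/rowP => k; rewrite !mxE /=.
have [-> | kp] := eqVneq k p; first by rewrite eq_sym (negbTE qp) /=; lia.
have [-> | kq] := eqVneq k q; first by rewrite /=; lia.
by rewrite a0 // !mulr0 addr0.
Qed.

Definition even_sign_vector (u : 'I_8 -> int) : Prop :=
  (forall k, is_sign (u k)) /\ \prod_k u k = 1.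

Definition even_signed_perm (w : vec8 -> vec8) : Prop :=
  exists (pi : {perm 'I_8}) (u : 'I_8 -> int),
    even_sign_vector u /\ forall x k, w x 0 k = u k * x 0 (pi k).

Lemma even_signed_perm_id : even_signed_perm id.
Proof.
exists 1%g, (fun _ => 1); split; last by move=> x k; rewrite perm1 mul1r.
by split; [left | rewrite big1].
Qed.

Lemma even_signed_perm_comp f g :
  even_signed_perm f -> even_signed_perm g -> even_signed_perm (f \o g).
Proof.
move=> [pi1 [u1 [[sign1 prod1] fE]]] [pi2 [u2 [[sign2 prod2] gE]]].
exists (pi1 * pi2)%g, (fun k => u1 k * u2 (pi1 k)); split.
  split=> [k|]; first exact: is_signM.
  rewrite (reindex_inj (@perm_inj _ pi1)) in prod2.
  by rewrite big_split /= prod1 prod2 mulr1.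
by move=> x k; rewrite /= fE gE permM mulrA.
Qed.

Lemma bD8_sum_delta p q s t (x : vec8) : p != q ->
  bD8 (s *: 'e_p + t *: 'e_q) x = - (s * x 0 p + t * x 0 q).
Proof.
move=> pq; congr (- _).
rewrite (bigD1 p) // (bigD1 q) 1?eq_sym //= big1 => [|k /andP[kp kq]].
  by rewrite !mxE !eqxx (negbTE pq) eq_sym (negbTE pq) /=; lia.
by rewrite !mxE (negbTE kp) (negbTE kq) /= !mulr0 addr0 mul0r.
Qed.

Lemma even_signed_perm_refl a : isRootD8 a -> even_signed_perm (refl a).
Proof.
move=> /root_D8E [p [q [s [t [pq sign_s sign_t ->]]]]].
exists (tperm p q), (fun k => if (k == p) || (k == q) then - (s * t) else 1); split.
  split=> [k|].
    by case: ifP => _; [apply/is_signN/is_signM | left].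
  rewrite (bigD1 p) // (bigD1 q) 1?eq_sym //= big1 => [|k /andP[/negbTE -> /negbTE ->] //].
  by rewrite !eqxx orbT /=; case: sign_s => ->; case: sign_t => ->; lia.
move=> x k; rewrite /refl bD8_sum_delta // !mxE.
have [-> | kp] := eqVneq k p.
  by rewrite tpermL eqxx (negbTE pq) /=; case: sign_s => ->; case: sign_t => ->; lia.
have [-> | kq] := eqVneq k q.
  by rewrite tpermR eqxx /=; case: sign_s => ->; case: sign_t => ->; lia.
by rewrite tpermD 1?eq_sym //=; lia.
Qed.

Lemma inWD8_even_signed_perm w : inWD8 w -> even_signed_perm w.
Proof.
elim=> [|a f root_a _ IH]; first exact: even_signed_perm_id.
exact/even_signed_perm_comp/IH/even_signed_perm_refl.
Qed.

Definition pairing (f : 'I_8 -> int) (v : vec8) : int := \sum_(k < 8) f k * v 0 k.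

Lemma pairingZ f n v : pairing f (n *: v) = n * pairing f v.
Proof. by rewrite /pairing mulr_sumr; apply: eq_bigr => k _; rewrite mxE mulrCA. Qed.

Lemma pairing_sum f (I : finType) (c : I -> int) (L : I -> vec8) :
  pairing f (\sum_i c i *: L i) = \sum_i c i * pairing f (L i).
Proof.
rewrite /pairing; under eq_bigr do rewrite summxE big_distrr.
rewrite exchange_big; apply: eq_bigr => i _; rewrite mulr_sumr.
by apply: eq_bigr => k _; rewrite mxE mulrCA.
Qed.

Lemma imageL_gen (L : 'I_6 -> vec8) i : imageL L (L i).
Proof.
exists (fun j => (j == i)%:R); rewrite (bigD1 i) //= big1 => [|j /negbTE ->].
  by rewrite eqxx scale1r addr0.
by rewrite scale0r.
Qed.

Lemma imageL_pairing0 f L v :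
  (forall i, pairing f (L i) = 0) -> imageL L v -> pairing f v = 0.
Proof. by move=> fL0 [c ->]; rewrite pairing_sum big1 // => i _; rewrite fL0 mulr0. Qed.

Lemma primitive_of_equations (J : Type) (f : J -> 'I_8 -> int) L :
  (forall v, imageL L v <-> forall j, pairing (f j) v = 0) -> primitiveL L.
Proof.
move=> imageE v n _ n0 /imageE nv0; apply/imageE => j.
by apply/eqP; move: (nv0 j) => /eqP; rewrite pairingZ mulf_eq0 (negbTE n0).
Qed.

Lemma pairing1_even_signed_perm w : even_signed_perm w ->
  exists2 u, even_sign_vector u & forall x, pairing (fun _ => 1) (w x) = pairing u x.
Proof.
move=> [pi [u [[sign_u prod_u] wE]]].
exists (fun j => u (pi^-1 j)%g).
  by split=> [//|]; rewrite (reindex_inj (@perm_inj _ pi^-1%g)) in prod_u.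
move=> x; rewrite /pairing (reindex_inj (@perm_inj _ pi^-1%g)).
by apply: eq_bigr => j _; rewrite mul1r wE permKV.
Qed.

Lemma emb1E (i : 'I_6) (k : 'I_8) : emb1 i 0 k =
  if (i < 5)%N then (k == i.+1 :> nat)%:R - (k == i :> nat)%:R else ((6 <= k)%N)%:R.
Proof.
by case: i => [[|[|[|[|[|[|//]]]]]] ?]; rewrite /emb1 /d /eps /= !mxE;
  case: k => [[|[|[|[|[|[|[|[|//]]]]]]]] ?].
Qed.

Lemma emb2E (i : 'I_6) (k : 'I_8) : emb2 i 0 k =
  if (i < 5)%N then (k == i.+1 :> nat)%:R - (k == i :> nat)%:R
  else (k == 7 :> nat)%:R - (k == 6 :> nat)%:R.
Proof.
by case: i => [[|[|[|[|[|[|//]]]]]] ?]; rewrite /emb2 /d /eps /= !mxE;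
  case: k => [[|[|[|[|[|[|[|[|//]]]]]]]] ?].
Qed.

Definition emb1_eqn (b : bool) (k : 'I_8) : int :=
  if b then ((k < 6)%N)%:R else (k == 6 :> nat)%:R - (k == 7 :> nat)%:R.

Lemma imageL_emb1 v : imageL emb1 v <-> forall b, pairing (emb1_eqn b) v = 0.
Proof.
split=> [+ b|eqns]; first apply: imageL_pairing0 => i.
  rewrite /pairing; under eq_bigr do rewrite emb1E.
  rewrite !big_ord_recr big_ord0 /=.
  by case: b; case: i => [[|[|[|[|[|[|//]]]]]] ?].
(* Reindexing the coordinates by nat numerals makes the terms produced by
   big_ord_recr syntactically comparable, so that lia can match them. *)
pose V m := v 0 (inord m); have vE k : v 0 k = V k by rewrite /V inord_val.
have := eqns true; have := eqns false.
rewrite /pairing !big_ord_recr !big_ord0 /= !vE /= => eqn67 eqn06.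
exists (fun i => if (i < 5)%N then - \sum_(m < i.+1) V m else V 6%N).
apply/rowP => k; rewrite summxE; under eq_bigr do rewrite mxE emb1E.
rewrite !big_ord_recr !big_ord0 /= vE.
by case: k => [[|[|[|[|[|[|[|[|//]]]]]]]] ?] /=; lia.
Qed.

Definition emb2_eqn (b : bool) (k : 'I_8) : int :=
  if b then ((k < 6)%N)%:R else ((6 <= k)%N)%:R.

Lemma imageL_emb2 v : imageL emb2 v <-> forall b, pairing (emb2_eqn b) v = 0.
Proof.
split=> [+ b|eqns]; first apply: imageL_pairing0 => i.
  rewrite /pairing; under eq_bigr do rewrite emb2E.
  rewrite !big_ord_recr big_ord0 /=.
  by case: b; case: i => [[|[|[|[|[|[|//]]]]]] ?].
pose V m := v 0 (inord m); have vE k : v 0 k = V k by rewrite /V inord_val.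
have := eqns true; have := eqns false.
rewrite /pairing !big_ord_recr !big_ord0 /= !vE /= => eqn67 eqn06.
exists (fun i => if (i < 5)%N then - \sum_(m < i.+1) V m else V 7%N).
apply/rowP => k; rewrite summxE; under eq_bigr do rewrite mxE emb2E.
rewrite !big_ord_recr !big_ord0 /= vE.
by case: k => [[|[|[|[|[|[|[|[|//]]]]]]]] ?] /=; lia.
Qed.

Lemma emb1_embedding : isEmbeddingA5A1 emb1.
Proof.
split=> [i|i j].
  rewrite /inD8; under eq_bigr do rewrite emb1E.
  by rewrite !big_ord_recr big_ord0; case: i => [[|[|[|[|[|[|//]]]]]] ?].
rewrite /bD8; under eq_bigr do rewrite !emb1E.
rewrite !big_ord_recr big_ord0.
by case: i => [[|[|[|[|[|[|//]]]]]] ?]; case: j => [[|[|[|[|[|[|//]]]]]] ?].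
Qed.

Lemma emb2_embedding : isEmbeddingA5A1 emb2.
Proof.
split=> [i|i j].
  rewrite /inD8; under eq_bigr do rewrite emb2E.
  by rewrite !big_ord_recr big_ord0; case: i => [[|[|[|[|[|[|//]]]]]] ?].
rewrite /bD8; under eq_bigr do rewrite !emb2E.
rewrite !big_ord_recr big_ord0.
by case: i => [[|[|[|[|[|[|//]]]]]] ?]; case: j => [[|[|[|[|[|[|//]]]]]] ?].
Qed.

Lemma imageL_emb2_sum0 v : imageL emb2 v -> pairing (fun _ => 1) v = 0.
Proof.
apply: imageL_pairing0 => i; rewrite /pairing; under eq_bigr do rewrite emb2E.
by rewrite !big_ord_recr big_ord0; case: i => [[|[|[|[|[|[|//]]]]]] ?].
Qed.

Lemma emb1_no_even_sign_annihilator u :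
  even_sign_vector u -> ~ forall i, pairing u (emb1 i) = 0.
Proof.
move=> [sign_u prod_u] ann.
pose U m := u (inord m); have uE k : u k = U k by rewrite /U inord_val.
have sign_U m : is_sign (U m) := sign_u (inord m).
have ann_nat i (lt_i6 : (i < 6)%N) := ann (Ordinal lt_i6).
move: (ann_nat 0%N isT) (ann_nat 1%N isT) (ann_nat 2%N isT) (ann_nat 3%N isT)
  (ann_nat 4%N isT) (ann_nat 5%N isT) prod_u.
rewrite /pairing !big_ord_recr !big_ord0 !emb1E /= !uE /= => e01 e12 e23 e34 e45 e67.
have -> : U 1%N = U 0%N by lia.
have -> : U 2%N = U 0%N by lia.
have -> : U 3%N = U 0%N by lia.
have -> : U 4%N = U 0%N by lia.
have -> : U 5%N = U 0%N by lia.
have -> : U 6%N = - U 7%N by lia.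
by case: (sign_U 0%N) => ->; case: (sign_U 7%N) => ->; lia.
Qed.

Lemma emb1_not_W_emb2 w : inWD8 w -> ~ forall v, imageL emb1 v -> imageL emb2 (w v).
Proof.
move=> /inWD8_even_signed_perm /pairing1_even_signed_perm [u even_u wE] emb12.
apply: (emb1_no_even_sign_annihilator even_u) => i.
by rewrite -wE; apply/imageL_emb2_sum0/emb12/imageL_gen.
Qed.

Theorem mainTheorem5 :
  isEmbeddingA5A1 emb1 /\ isEmbeddingA5A1 emb2 /\
  primitiveL emb1 /\ primitiveL emb2 /\
  ~ (exists w, inWD8 w /\ mapsOnto w emb1 emb2).
Proof.
split; first exact: emb1_embedding.
split; first exact: emb2_embedding.
split; first exact: primitive_of_equations imageL_emb1.
split; first exact: primitive_of_equations imageL_emb2.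
by move=> [w [/emb1_not_W_emb2 not12 [emb12 _]]]; apply: not12.
Qed.
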